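(* Let $r \le \min(M,N)$ be positive integers and let $\mathcal{P}=\mathcal{B}_{\infty,+}=\{\mathbf{x}\in\mathbb{R}^r \mid \mathbf{0}\le\mathbf{x}\le\mathbf{1}\}$ (componentwise inequalities). Let $\mathbf{H}_g\in\mathbb{R}^{M\times r}$ have full column rank, let $\mathbf{S}_g\in\mathbb{R}^{r\times N}$ have all of its columns in $\mathcal{P}$, and set $\mathbf{Y}=\mathbf{H}_g\mathbf{S}_g$. Suppose $\mathbf{S}_g$ is a sufficiently scattered factor corresponding to $\mathcal{P}$ (as defined in the context). Consider the Det-Max optimization problem $$\max_{\mathbf{H}\in\mathbb{R}^{M\times r},\ \mathbf{S}\in\mathbb{R}^{r\times N}} \det(\mathbf{S}\mathbf{S}^T)\quad\text{subject to}\quad \mathbf{Y}=\mathbf{H}\mathbf{S},\ \ \mathbf{S}_{:,j}\in\mathcal{P}\ \ (j=1,\dots,N).$$ Then every global optimum $(\mathbf{H}_*,\mathbf{S}_* )$ of this problem satisfies $$\mathbf{H}_*=\mathbf{H}_g\boldsymbol{\Pi}^T,\qquad \mathbf{S}_*=\boldsymbol{\Pi}\mathbf{S}_g,$$ for some permutation matrix $\boldsymbol{\Pi}\in\mathbb{R}^{r\times r}$.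
   Context: $\mathbf{1}$ and $\mathbf{0}$ denote the all-ones and all-zeros vectors. $\mathbf{S}_{:,j}$ denotes the $j$-th column of $\mathbf{S}$; $\mathrm{conv}(\mathbf{S})$ is the convex hull of the columns of $\mathbf{S}$. For a convex polytope $\mathcal{P}\subset\mathbb{R}^r$ with nonempty interior, $\mathcal{E}_\mathcal{P}$ denotes its maximum volume inscribed ellipsoid (MVIE), i.e. the (unique) ellipsoid of maximal volume contained in $\mathcal{P}$, written $\mathcal{E}_\mathcal{P}=\{\mathbf{C}_\mathcal{P}\mathbf{u}+\mathbf{g}_\mathcal{P}\mid \|\mathbf{u}\|_2\le 1\}$ with $\mathbf{C}_\mathcal{P}\succeq 0$ and center $\mathbf{g}_\mathcal{P}$. For a set $C\subset\mathbb{R}^r$ and point $\mathbf{d}$, the polar of $C$ with respect to $\mathbf{d}$ is $C^{*,\mathbf{d}}=\{\mathbf{x}\in\mathbb{R}^r\mid \langle\mathbf{x},\mathbf{y}-\mathbf{d}\rangle\le 1\ \forall \mathbf{y}\in C\}$. $\mathrm{bd}(\cdot)$ denotes boundary and $\mathrm{ext}(\cdot)$ the set of extreme points (vertices). A matrix $\mathbf{S}\in\mathbb{R}^{r\times N}$ is called a sufficiently scattered factor corresponding to $\mathcal{P}$ if (i) $\mathcal{P}\supseteq\mathrm{conv}(\mathbf{S})\supset\mathcal{E}_\mathcal{P}$, and (ii) $\mathrm{conv}(\mathbf{S})^{*,\mathbf{g}_\mathcal{P}}\cap\mathrm{bd}(\mathcal{E}_\mathcal{P}^{*,\mathbf{g}_\mathcal{P}})=\mathrm{ext}(\mathcal{P}^{*,\mathbf{g}_\mathcal{P}})$.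 *)

From HB Require Import structures.
From mathcomp Require Import all_boot all_order all_algebra all_fingroup.
From mathcomp Require Import all_classical all_reals all_analysis.
Set Implicit Arguments. Unset Strict Implicit. Unset Printing Implicit Defensive.
Import Order.TTheory GRing.Theory Num.Theory.
Import numFieldTopology.Exports numFieldNormedType.Exports.
Local Open Scope classical_set_scope.
Local Open Scope ring_scope.

Section Defs.
Variable R : realType.

Definition dotv {r : nat} (x y : 'cV[R]_r) : R := \sum_(i < r) x i 0 * y i 0.

Definition box (r : nat) : set 'cV[R]_r :=
  [set x | forall i : 'I_r, 0 <= x i 0 <= 1].

Definition psd {r : nat} (C : 'M[R]_r) : Prop :=
  C^T = C /\ forall x : 'cV[R]_r, 0 <= dotv x (C *m x).

Definition ellipsoid {r : nat} (C : 'M[R]_r) (g : 'cV[R]_r) : set 'cV[R]_r :=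
  [set C *m u + g | u in [set u : 'cV[R]_r | dotv u u <= 1]].

(* (C, g) describes the maximum volume inscribed ellipsoid of P; the volume of
   ellipsoid C g (C psd) is det C times the volume of the unit ball. *)
Definition is_MVIE {r : nat} (P : set 'cV[R]_r) (C : 'M[R]_r) (g : 'cV[R]_r) : Prop :=
  [/\ psd C, ellipsoid C g `<=` P &
      forall (C' : 'M[R]_r) (g' : 'cV[R]_r),
        psd C' -> ellipsoid C' g' `<=` P -> \det C' <= \det C].

Definition conv_cols {r N : nat} (S : 'M[R]_(r, N)) : set 'cV[R]_r :=
  [set S *m w | w in [set w : 'cV[R]_N |
     (forall j : 'I_N, 0 <= w j 0) /\ \sum_(j < N) w j 0 = 1]].

Definition polar {r : nat} (C : set 'cV[R]_r) (d : 'cV[R]_r) : set 'cV[R]_r :=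
  [set x | forall y, C y -> dotv x (y - d) <= 1].

Definition bd {r : nat} (A : set 'cV[R]_r) : set 'cV[R]_r :=
  closure A `\` interior A.

Definition ext {r : nat} (C : set 'cV[R]_r) : set 'cV[R]_r :=
  [set x | C x /\ forall (y z : 'cV[R]_r) (t : R), C y -> C z -> 0 < t -> t < 1 ->
            x = t *: y + (1 - t) *: z -> y = x /\ z = x].

Definition suff_scattered {r N : nat} (P : set 'cV[R]_r) (S : 'M[R]_(r, N)) : Prop :=
  exists (C : 'M[R]_r) (g : 'cV[R]_r),
    [/\ is_MVIE P C g,
        conv_cols S `<=` P,
        ellipsoid C g `<=` conv_cols S &
        polar (conv_cols S) g `&` bd (polar (ellipsoid C g) g) = ext (polar P g)].

Definition detmax_feasible {M N r : nat} (Y : 'M[R]_(M, N))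
    (H : 'M[R]_(M, r)) (S : 'M[R]_(r, N)) : Prop :=
  Y = H *m S /\ forall j : 'I_N, @box r (col j S).

Definition detmax_optimal {M N r : nat} (Y : 'M[R]_(M, N))
    (H : 'M[R]_(M, r)) (S : 'M[R]_(r, N)) : Prop :=
  detmax_feasible Y H S /\
  forall (H' : 'M[R]_(M, r)) (S' : 'M[R]_(r, N)),
    detmax_feasible Y H' S' -> \det (S' *m S'^T) <= \det (S *m S^T).

End Defs.
Arguments box R r : clear implicits.

From mathcomp Require Import all_boot all_order all_algebra all_fingroup.
From mathcomp Require Import all_classical all_reals all_analysis.
From mathcomp Require Import ring lra.
Set Implicit Arguments. Unset Strict Implicit. Unset Printing Implicit Defensive.
Import Order.TTheory GRing.Theory Num.Theory.
Import numFieldTopology.Exports numFieldNormedType.Exports.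
Local Open Scope classical_set_scope.
Local Open Scope ring_scope.

(* The maximum volume ellipsoid inscribed in the box [0,1]^r is the ball of radius 1/2 about
   its centre g.  The key estimate: if an ellipsoid { C u + g | |u| <= 1 } lies in a slab
   0 <= <a, y> <= 1, then 4 |C a|^2 <= 1, with equality only if <a, g> = 1/2.
   An optimum satisfies S_* = A S_g with det(A)^2 >= 1, by optimality and full rank; the
   rows a_i of A cut out slabs containing conv(S_g), which contains the MVIE.  Hadamard's
   inequality for A C, together with det C >= 2^-r, forces every slab to be tight, so 2 a_i
   lies in the polar of conv(S_g) and on the boundary of the polar of the MVIE.  Sufficient
   scatteredness makes 2 a_i a vertex of the polar of the box, the cross-polytope
   sum_k |y_k| <= 2, and <a_i, g> = 1/2 forces a_i = e_k.  Hence A is a permutation matrix. *)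

Lemma prod_ge_expn_eq (R : realFieldType) n (f : 'I_n -> R) c :
  0 < c -> (forall i, 0 <= f i <= c) -> c ^+ n <= \prod_i f i -> forall i, f i = c.
Proof.
move=> c_gt0 f_bnd prod_ge i; apply/eqP; rewrite eq_le (andP (f_bnd i)).2 /= leNgt.
apply/negP => fi_lt; set c' := \prod_(j | j != i) c.
have c'_gt0 : 0 < c' by apply: prodr_gt0.
have prod_le : \prod_j f j <= f i * c'.
  rewrite (bigD1 i) //= ler_wpM2l ?(andP (f_bnd i)).1 //.
  by apply: ler_prod => j _; exact: f_bnd.
have cnE : c ^+ n = c * c' by rewrite -[in LHS](card_ord n) -prodr_const (bigD1 i).
have : f i * c' < c * c' by rewrite ltr_pM2r.
lra.
Qed.

Section Gram.
Variable R : realFieldType.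

Lemma gram_diag m n (B : 'M[R]_(m, n)) i : (B *m B^T) i i = \sum_k B i k ^+ 2.
Proof. by rewrite mxE; apply: eq_bigr => k _; rewrite mxE expr2. Qed.

Lemma gram_diag_ge0 m n (B : 'M[R]_(m, n)) i : 0 <= (B *m B^T) i i.
Proof. by rewrite gram_diag sumr_ge0 // => k _; rewrite sqr_ge0. Qed.

Lemma gram_rV_eq0 n (b : 'rV[R]_n) : b *m b^T = 0 -> b = 0.
Proof.
move=> /(congr1 (fun M : 'M[R]_1 => M 0 0)); rewrite gram_diag mxE => /eqP.
rewrite psumr_eq0 => [/allP sq0|k _]; last exact: sqr_ge0.
by apply/rowP => k; rewrite mxE; apply/eqP; rewrite -sqrf_eq0 (implyP (sq0 k _)).
Qed.

Lemma gram_orthogonal_split r n (b : 'rV[R]_n) (B : 'M[R]_(r, n)) :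
  exists c : 'cV[R]_r, (B - c *m b) *m b^T = 0.
Proof.
have [b0|bn0] := eqVneq (b *m b^T) 0.
  exists 0; suff -> : b = 0 by rewrite trmx0 mulmx0.
  exact: gram_rV_eq0.
exists (B *m b^T *m invmx (b *m b^T)).
rewrite mulmxBl -(mulmxA _ b) mulmxKV ?subrr // unitmxE det_mx11 unitfE.
by apply: contra bn0 => /eqP b00; apply/eqP/matrixP => i j; rewrite !ord1 b00 mxE.
Qed.

Lemma gram_det_hadamard r n (B : 'M[R]_(r, n)) :
  0 <= \det (B *m B^T) <= \prod_i (B *m B^T) i i.
Proof.
(* Eliminate the first row b: the Schur complement is the Gram matrix of the rows of B'
   projected orthogonally to b, whose diagonal entries can only decrease. *)
elim: r B => [|r IH] B; first by rewrite det_mx00 big_ord0 ler01 lexx.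
rewrite -[r.+1]/(1 + r)%N in B *; rewrite -(vsubmxK B).
set b := usubmx B; set B' := dsubmx B.
have [c bB''] := gram_orthogonal_split b B'; set B'' := B' - c *m b in bB''.
have bB''T : b *m B''^T = 0 by rewrite -[LHS]trmxK trmx_mul trmxK bB'' trmx0.
have gramE : B' *m B'^T = B'' *m B''^T + (c *m b) *m (c *m b)^T.
  have cross1 : B'' *m (c *m b)^T = 0 by rewrite trmx_mul mulmxA bB'' mul0mx.
  have cross2 : c *m b *m B''^T = 0 by rewrite -mulmxA bB''T mulmx0.
  rewrite -[B' in LHS](subrK (c *m b)) -/B'' linearD /= mulmxDl !mulmxDr.
  by rewrite cross1 cross2 addr0 add0r.
have L_col : col_mx b B' = block_mx 1%:M 0 c 1%:M *m col_mx b B''.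
  by rewrite mul_block_col !mul1mx mul0mx addr0 addrC subrK.
have detE : \det (col_mx b B' *m (col_mx b B')^T)
             = \det (b *m b^T) * \det (B'' *m B''^T).
  rewrite L_col trmx_mul mulmxA -(mulmxA _ (col_mx b B'')) !det_mulmx det_tr.
  rewrite det_lblock !det1 mulr1 mul1r mulr1.
  by rewrite tr_col_mx mul_col_row bB''T bB'' det_ublock.
have diagE : \prod_i (col_mx b B' *m (col_mx b B')^T) i i
              = (b *m b^T) 0 0 * \prod_i (B' *m B'^T) i i.
  rewrite big_split_ord big_ord1 tr_col_mx mul_col_row block_mxEul; congr (_ * _).
  by apply: eq_bigr => i _; rewrite block_mxEdr.
have [dB''0 dB''le] := andP (IH B'').
rewrite detE diagE det_mx11 mulr_ge0 ?gram_diag_ge0 //= ler_wpM2l ?gram_diag_ge0 //.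
apply: le_trans dB''le _; apply: ler_prod => i _.
by rewrite gram_diag_ge0 /= gramE [leRHS]mxE lerDl gram_diag_ge0.
Qed.

Lemma det_sqr_le_prod_gram n (B : 'M[R]_n) : \det B ^+ 2 <= \prod_i (B *m B^T) i i.
Proof. by have /andP[_] := gram_det_hadamard B; rewrite det_mulmx det_tr expr2. Qed.

Lemma gram_det_gt0 r n (B : 'M[R]_(r, n)) : row_free B -> 0 < \det (B *m B^T).
Proof.
move=> freeB; have /andP[det_ge0 _] := gram_det_hadamard B.
rewrite lt_neqAle det_ge0 andbT eq_sym; apply/det0P => -[v v_neq0 vBB].
have vBvB : (v *m B) *m (v *m B)^T = 0.
  by rewrite trmx_mul !mulmxA -(mulmxA v) vBB !mul0mx.
have vB0 : v *m B = 0 *m B by rewrite mul0mx; exact: gram_rV_eq0.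
by move: v_neq0; rewrite (row_free_inj freeB vB0) eqxx.
Qed.

End Gram.

Lemma row_eq_delta (R : nzRingType) n (a : 'rV[R]_n) :
  (forall k l, k != l -> a 0 k = 0 \/ a 0 l = 0) -> \sum_k a 0 k = 1 ->
  exists k, a = 'e_k.
Proof.
move=> supp sum1; have [k ak_neq0|a0] := pickP (fun k => a 0 k != 0); last first.
  by move: sum1; rewrite big1 => [/esym/eqP|k _]; [rewrite oner_eq0 | apply/eqP/negbFE/a0].
have others j : j != k -> a 0 j = 0.
  by move=> jk; case: (supp j k jk) => // ak0; rewrite ak0 eqxx in ak_neq0.
exists k; apply/rowP => j; rewrite mxE eqxx /=; have [->|/others //] := eqVneq j k.
by rewrite -sum1 (bigD1 k) //= big1 ?addr0 // => j /others.
Qed.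

Lemma perm_mx_of_rows (R : comUnitRingType) n (A : 'M[R]_n) :
  A \in unitmx -> (forall i, exists j, row i A = 'e_j) -> exists s, A = perm_mx s.
Proof.
move=> A_unit /fin_all_exists[s sE].
have s_inj : injective s.
  move=> i i' si; apply/eqP; apply: contraTT A_unit => ii'.
  rewrite unitmxE (determinant_alternate ii') ?unitr0 // => j.
  have /rowP/(_ j) : row i A = row i' A by rewrite !sE si.
  by rewrite !mxE.
exists (perm s_inj); apply/row_matrixP => i; rewrite sE; apply/rowP => j.
by rewrite !mxE permE eq_sym.
Qed.

Section DotProduct.
Variables (R : realType) (r : nat).
Implicit Types (x y z : 'cV[R]_r).

Lemma dotvE x y : dotv x y = (x^T *m y) 0 0.
Proof. by rewrite /dotv mxE; apply: eq_bigr => i _; rewrite mxE. Qed.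

Lemma dotvC x y : dotv x y = dotv y x.
Proof. by rewrite /dotv; apply: eq_bigr => i _; rewrite mulrC. Qed.

Lemma dotvDr x y z : dotv x (y + z) = dotv x y + dotv x z.
Proof. by rewrite !dotvE mulmxDr mxE. Qed.

Lemma dotvZr x y a : dotv x (a *: y) = a * dotv x y.
Proof. by rewrite !dotvE -scalemxAr mxE. Qed.

Lemma dotvZl x y a : dotv (a *: x) y = a * dotv x y.
Proof. by rewrite dotvC dotvZr dotvC. Qed.

Lemma dotvNr x y : dotv x (- y) = - dotv x y.
Proof. by rewrite -scaleN1r dotvZr mulN1r. Qed.

Lemma dotvBr x y z : dotv x (y - z) = dotv x y - dotv x z.
Proof. by rewrite dotvDr dotvNr. Qed.

Lemma dotv_ge0 x : 0 <= dotv x x.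
Proof. by apply: sumr_ge0 => i _; rewrite -expr2 sqr_ge0. Qed.

Lemma dotv_le_sqr x i : x i 0 ^+ 2 <= dotv x x.
Proof.
rewrite /dotv (bigD1 i) //= -expr2 lerDl.
by apply: sumr_ge0 => j _; rewrite -expr2 sqr_ge0.
Qed.

Lemma dotv_amgm x y : 2 * dotv x y <= dotv x x + dotv y y.
Proof.
have := dotv_ge0 (x - y); rewrite !dotvBr !(dotvC (x - y)) !dotvBr (dotvC y x).
lra.
Qed.

Lemma dotv_mulmx (C : 'M[R]_r) x y : C^T = C -> dotv x (C *m y) = dotv (C *m x) y.
Proof. by move=> symC; rewrite !dotvE trmx_mul symC mulmxA. Qed.

Lemma dotv_row m (B : 'M[R]_(m, r)) i x : dotv (row i B)^T x = (B *m x) i 0.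
Proof. by rewrite /dotv mxE; apply: eq_bigr => j _; rewrite !mxE. Qed.

Lemma dotv_row_row m (B : 'M[R]_(m, r)) i :
  dotv (row i B)^T (row i B)^T = (B *m B^T) i i.
Proof. by rewrite dotv_row !mxE; apply: eq_bigr => j _; rewrite !mxE. Qed.

End DotProduct.

Section Ellipsoid.
Variables (R : realType) (r : nat).

Lemma slab_width (w : 'cV[R]_r) (t : R) :
  (forall u, dotv u u <= 1 -> 0 <= dotv w u + t <= 1) ->
  4 * dotv w w <= 1 /\ (4 * dotv w w = 1 -> t = 2^-1).
Proof.
move=> slab; set n := dotv w w.
have [n0|n_neq0] := eqVneq n 0.
  by rewrite n0 mulr0; split=> // /esym/eqP; rewrite oner_eq0.
set s := Num.sqrt n.
have s_gt0 : 0 < s by rewrite sqrtr_gt0 lt_neqAle eq_sym n_neq0 dotv_ge0.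
have sE : s ^+ 2 = n by rewrite sqr_sqrtr ?dotv_ge0.
pose u := s^-1 *: w.
have uu : dotv u u = 1 by rewrite dotvZl dotvZr -/n -sE; field; rewrite gt_eqF.
have wu : dotv w u = s by rewrite dotvZr -/n -sE; field; rewrite gt_eqF.
have /andP[_ le1] : 0 <= dotv w u + t <= 1 by apply: slab; rewrite uu.
have /andP[ge0 _] : 0 <= dotv w (- u) + t <= 1.
  by apply: slab; rewrite dotvNr dotvC dotvNr opprK uu.
rewrite dotvNr wu in ge0; rewrite wu in le1; rewrite -sE.
split=> [|sq1]; first by nra.
have : s = 2^-1 by nra.
lra.
Qed.

Lemma ellipsoid_in_box_tight (A C : 'M[R]_r) g :
  ellipsoid C g `<=` [set y | box R r (A *m y)] ->
  (2^-1) ^+ r <= \det C -> 1 <= \det A ^+ 2 ->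
  forall i, (A *m C *m (A *m C)^T) i i = 4^-1 /\ (A *m g) i 0 = 2^-1.
Proof.
move=> EinA detC detA; set B := A *m C.
have slab i :
    4 * (B *m B^T) i i <= 1 /\ (4 * (B *m B^T) i i = 1 -> (A *m g) i 0 = 2^-1).
  rewrite -dotv_row_row; apply: slab_width => u uu.
  have -> : dotv (row i B)^T u + (A *m g) i 0 = (A *m (C *m u + g)) i 0.
    by rewrite dotv_row mulmxDr mulmxA [RHS]mxE.
  exact: EinA (C *m u + g) (ex_intro2 _ _ u uu erefl) i.
have gram_bnd i : 0 <= (B *m B^T) i i <= 4^-1.
  by rewrite gram_diag_ge0 /=; have [] := slab i; lra.
have prod_ge : (4^-1) ^+ r <= \prod_i (B *m B^T) i i.
  apply: le_trans (det_sqr_le_prod_gram B); rewrite det_mulmx exprMn.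
  have detC_ge0 : 0 <= (2^-1) ^+ r :> R by rewrite exprn_ge0.
  have -> : (4^-1) ^+ r = ((2^-1) ^+ r) ^+ 2 :> R.
    by rewrite exprAC; congr (_ ^+ _); rewrite expr2 -invfM; congr (_^-1); lra.
  nra.
have diag : forall i, (B *m B^T) i i = 4^-1.
  by apply: (prod_ge_expn_eq _ gram_bnd prod_ge); rewrite invr_gt0.
by move=> i; split; [exact: diag | apply: (slab i).2; rewrite diag; lra].
Qed.

Lemma half_ball_sub_box : ellipsoid (2^-1)%:M (const_mx 2^-1) `<=` box R r.
Proof.
move=> _ [u uu <-] i; rewrite mul_scalar_mx !mxE.
have : u i 0 ^+ 2 <= 1 by apply: le_trans (dotv_le_sqr u i) uu.
by move=> ui; apply/andP; split; nra.
Qed.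

Lemma MVIE_box_det C g : is_MVIE (box R r) C g -> (2^-1) ^+ r <= \det C.
Proof.
case=> _ _ maxC; rewrite -det_scalar; apply: maxC half_ball_sub_box.
split=> [|x]; first by rewrite tr_scalar_mx.
by rewrite mul_scalar_mx dotvZr mulr_ge0 ?dotv_ge0.
Qed.

Lemma MVIE_box_center C g : is_MVIE (box R r) C g -> g = const_mx 2^-1.
Proof.
move=> MVIE; have [_ EinB _] := MVIE.
have EinB1 : ellipsoid C g `<=` [set y | box R r (1%:M *m y)].
  by move=> y /EinB; rewrite /= mul1mx.
apply/matrixP => i j; rewrite ord1 mxE.
have [|_ <-] := ellipsoid_in_box_tight EinB1 (MVIE_box_det MVIE) _ i.
  by rewrite det1 expr1n.
by rewrite mul1mx.
Qed.

Lemma bd_polar_ellipsoid (C : 'M[R]_r) (g x : 'cV[R]_r) :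
  C^T = C -> dotv (C *m x) (C *m x) = 1 -> bd (polar (ellipsoid C g) g) x.
Proof.
move=> symC Cx1; split.
  apply: subset_closure => _ [u /= uu <-]; rewrite addrK dotv_mulmx //.
  by have := dotv_amgm (C *m x) u; rewrite Cx1; lra.
move=> /nbhs_ballP[e e_gt0 xe].
pose t := e / (2 * (`|x| + 1)).
have t_gt0 : 0 < t by rewrite divr_gt0 // mulr_gt0 // ltr_pwDr.
have : ball x e ((1 + t) *: x).
  rewrite -ball_normE /ball_ /= scalerDl scale1r opprD addNKr normrN normrZ gtr0_norm //.
  rewrite /t mulrAC ltr_pdivrMr; last by rewrite mulr_gt0 // ltr_pwDr.
  by rewrite ltr_pM2l //; have := normr_ge0 x; lra.
move=> /xe /(_ (C *m (C *m x) + g)) Cx_polar.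
have : dotv ((1 + t) *: x) (C *m (C *m x) + g - g) <= 1.
  by apply: Cx_polar; exists (C *m x); rewrite //= Cx1.
by rewrite addrK dotvZl dotv_mulmx // Cx1 mulr1; lra.
Qed.

End Ellipsoid.

Section BoxPolar.
Variables (R : realType) (r : nat).

Lemma polar_box_center :
  polar (box R r) (const_mx 2^-1) = [set y : 'cV[R]_r | \sum_k `|y k 0| <= 2].
Proof.
apply/seteqP; split=> y /= y_polar.
  pose p : 'cV[R]_r := \col_k (2^-1 + Num.sg (y k 0) / 2).
  have p_box : box R r p.
    move=> k; rewrite mxE.
    have : `|Num.sg (y k 0)| <= 1 by rewrite normr_sg; case: (_ != 0).
    by rewrite ler_norml => /andP[? ?]; apply/andP; split; lra.
  have := y_polar p p_box.
  have -> : dotv y (p - const_mx 2^-1) = (\sum_k `|y k 0|) / 2.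
    by rewrite /dotv mulr_suml; apply: eq_bigr => k _; rewrite !mxE normrEsg; field.
  lra.
move=> p p_box; apply: (@le_trans _ _ ((\sum_k `|y k 0|) / 2)); last by lra.
rewrite /dotv mulr_suml; apply: ler_sum => k _; rewrite !mxE.
have /andP[p_ge0 p_le1] := p_box k.
apply: le_trans (ler_norm _) _; rewrite normrM ler_wpM2l //.
by rewrite ler_norml; apply/andP; split; lra.
Qed.

Lemma normr_add_sg (x e : R) : `|e| <= `|x| -> `|x + e * Num.sg x| = `|x| + e.
Proof.
rewrite ler_norml => /andP[e_lb e_ub].
case: (ltrgtP x 0) => [x_lt0|x_gt0|x0].
- by rewrite ltr0_sg // ltr0_norm // in e_lb e_ub *; rewrite ler0_norm; lra.
- by rewrite gtr0_sg // gtr0_norm // in e_lb e_ub *; rewrite ger0_norm; lra.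
- rewrite x0 normr0 in e_lb e_ub *; have -> : e = 0 by lra.
  by rewrite mul0r addr0 normr0.
Qed.

Lemma ext_l1_ball (c : R) (x : 'cV[R]_r) :
  ext [set y : 'cV[R]_r | \sum_k `|y k 0| <= c] x ->
  forall k l, k != l -> x k 0 = 0 \/ x l 0 = 0.
Proof.
move=> [x_ball x_ext] k l kl.
have [xk0|xk_neq0] := eqVneq (x k 0) 0; first by left.
have [xl0|xl_neq0] := eqVneq (x l 0) 0; first by right.
(* Shifting mass e between the coordinates k and l, along their signs, keeps the l1 norm. *)
pose e := Num.min `|x k 0| `|x l 0|.
have e_gt0 : 0 < e by rewrite lt_min !normr_gt0 xk_neq0 xl_neq0.
pose d j : R := e * ((j == k)%:R - (j == l)%:R).
have d_le j : `|d j| <= `|x j 0|.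
  rewrite /d; have [->|jk] := eqVneq j k.
    by rewrite (negbTE kl) subr0 mulr1 gtr0_norm // ge_min lexx.
  have [->|jl] := eqVneq j l; last by rewrite subrr mulr0 normr0.
  by rewrite sub0r mulrN1 normrN gtr0_norm // ge_min lexx orbT.
have sum_delta m : \sum_j ((j == m)%:R : R) = 1.
  by rewrite (bigD1 m) //= eqxx big1 ?addr0 // => j /negPf ->.
have d_sum : \sum_j d j = 0 by rewrite -mulr_sumr sumrB !sum_delta subrr mulr0.
pose y : 'cV[R]_r := \col_j (x j 0 + d j * Num.sg (x j 0)).
pose z : 'cV[R]_r := \col_j (x j 0 + - d j * Num.sg (x j 0)).
have y_ball : \sum_j `|y j 0| <= c.
  under eq_bigr do rewrite mxE normr_add_sg ?d_le //.
  by rewrite big_split /= d_sum addr0.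
have z_ball : \sum_j `|z j 0| <= c.
  under eq_bigr do rewrite mxE normr_add_sg ?normrN ?d_le //.
  by rewrite big_split /= sumrN d_sum oppr0 addr0.
have xE : x = 2^-1 *: y + (1 - 2^-1) *: z.
  by apply/matrixP => i j; rewrite ord1 !mxE; field.
have [||yx _] := x_ext y z 2^-1 y_ball z_ball _ _ xE;
  rewrite ?invr_gt0 ?invf_lt1 ?ltr1n //.
have /eqP := congr1 (fun v : 'cV[R]_r => v k 0) yx.
rewrite mxE /d eqxx (negbTE kl) subr0 mulr1 -subr_eq0 addrAC subrr add0r.
by rewrite mulf_eq0 sgr_eq0 (negbTE xk_neq0) gt_eqF.
Qed.

Lemma ext_polar_box_row (A : 'M[R]_r) i :
  ext (polar (box R r) (const_mx 2^-1)) (2 *: (row i A)^T) ->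
  (A *m (const_mx 2^-1 : 'cV[R]_r)) i 0 = 2^-1 -> exists k, row i A = 'e_k.
Proof.
rewrite polar_box_center => /ext_l1_ball supp Ag_i; apply: row_eq_delta.
  move=> k l kl; have := supp k l kl; rewrite !mxE.
  by case=> /eqP; rewrite mulf_eq0 pnatr_eq0 /= => /eqP ->; [left | right].
have -> : \sum_k (row i A) 0 k = \sum_k A i k by apply: eq_bigr => k _; rewrite mxE.
move: Ag_i; rewrite mxE (eq_bigr (fun k => A i k * 2^-1)) => [|k _]; last first.
  by rewrite mxE.
by rewrite -mulr_suml; lra.
Qed.

End BoxPolar.

Section ConvexHull.
Variables (R : realType) (r N : nat).
Implicit Types (S : 'M[R]_(r, N)) (A C : 'M[R]_r) (g y : 'cV[R]_r).

Lemma conv_cols_mulmx A S y : conv_cols S y -> conv_cols (A *m S) (A *m y).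
Proof. by move=> [w w_simplex <-]; exists w => //; rewrite mulmxA. Qed.

Lemma conv_cols_box S : (forall j, box R r (col j S)) -> conv_cols S `<=` box R r.
Proof.
move=> S_box _ [w [w_ge0 w_sum] <-] i; rewrite mxE.
have S_bnd j : 0 <= S i j <= 1 by have := S_box j i; rewrite mxE.
apply/andP; split; first by apply: sumr_ge0 => j _; rewrite mulr_ge0 ?(andP (S_bnd j)).1.
by rewrite -w_sum; apply: ler_sum => j _; rewrite ler_piMl ?(andP (S_bnd j)).2.
Qed.

Lemma ellipsoid_row_free C g S :
  C \in unitmx -> ellipsoid C g `<=` conv_cols S -> row_free S.
Proof.
move=> C_unit EinS.
have [w0 _ w0E] : conv_cols S g.
  apply: EinS; exists 0; last by rewrite mulmx0 add0r.
  by rewrite /= /dotv big1 ?ler01 // => i _; rewrite mxE mul0r.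
have col_sub k : ((col k C)^T <= S^T)%MS.
  have [w _ wE] : conv_cols S (C *m delta_mx k 0 + g).
    apply: EinS; exists (delta_mx k 0) => //=.
    by rewrite dotvE trmx_delta mul_delta_mx mxE !eqxx.
  by rewrite colE -(addrK g (C *m _)) -wE -w0E -mulmxBr trmx_mul submxMl.
rewrite /row_free eqn_leq rank_leq_row -{1}(mxrank_unit C_unit).
rewrite -mxrank_tr -(mxrank_tr S).
by apply: mxrankS; apply/row_subP => k; rewrite -tr_col.
Qed.

Lemma tight_row_polar_bd S A C g i :
  C^T = C -> conv_cols S `<=` [set y | box R r (A *m y)] ->
  (A *m C *m (A *m C)^T) i i = 4^-1 -> (A *m g) i 0 = 2^-1 ->
  (polar (conv_cols S) g `&` bd (polar (ellipsoid C g) g)) (2 *: (row i A)^T).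
Proof.
move=> symC SinA gram_i Ag_i; split.
  move=> y /SinA /(_ i) /andP[_ Ay_le1].
  by rewrite dotvZl dotvBr !dotv_row Ag_i; lra.
apply: bd_polar_ellipsoid => //; rewrite -scalemxAr.
have -> : C *m (row i A)^T = (row i (A *m C))^T by rewrite row_mul trmx_mul symC.
by rewrite dotvZl dotvZr dotv_row_row gram_i; lra.
Qed.

End ConvexHull.

Lemma detmax_optimal_mixing (R : realType) (M N r : nat)
    (Hg Hs : 'M[R]_(M, r)) (Sg Ss : 'M[R]_(r, N)) :
  \rank Hg = r -> row_free Sg -> (forall j, box R r (col j Sg)) ->
  detmax_optimal (Hg *m Sg) Hs Ss ->
  exists A : 'M[R]_r, [/\ Ss = A *m Sg, Hg = Hs *m A & 1 <= \det A ^+ 2].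
Proof.
move=> Hg_rank Sg_free Sg_box [[Y_eq _] Ss_best].
have /row_fullP[L LHg] : row_full Hg by rewrite /row_full Hg_rank.
pose K := L *m Hs.
have SgE : Sg = K *m Ss by rewrite -mulmxA -Y_eq mulmxA LHg mul1mx.
have gramE : \det (Sg *m Sg^T) = \det K ^+ 2 * \det (Ss *m Ss^T).
  by rewrite SgE trmx_mul mulmxA -(mulmxA K) !det_mulmx det_tr mulrAC expr2.
have Sg_gram := gram_det_gt0 Sg_free.
have Sg_le_Ss := Ss_best Hg Sg (conj erefl Sg_box).
have detK2_gt0 : 0 < \det K ^+ 2.
  rewrite lt_neqAle sqr_ge0 andbT eq_sym.
  by apply: contraTneq Sg_gram => K0; rewrite gramE K0 mul0r ltxx.
have detK2_le1 : \det K ^+ 2 <= 1 by nra.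
have K_unit : K \in unitmx by rewrite unitmxE unitfE -sqrf_eq0 gt_eqF.
exists (invmx K); split.
- by rewrite SgE mulKmx.
- by apply: (row_free_inj Sg_free); rewrite /= Y_eq SgE mulmxA mulmxKV.
- by rewrite det_inv exprVn invf_ge1.
Qed.

Unset Implicit Arguments.

Theorem theorem4 (R : realType) (M N r : nat)
  (hr0 : (0 < r)%N) (hrM : (r <= M)%N) (hrN : (r <= N)%N)
  (Hg : 'M[R]_(M, r)) (Sg : 'M[R]_(r, N))
  (hHg : \rank Hg = r)
  (hSg : forall j : 'I_N, box R r (col j Sg))
  (hscat : suff_scattered (box R r) Sg)
  (Hs : 'M[R]_(M, r)) (Ss : 'M[R]_(r, N))
  (hopt : detmax_optimal (Hg *m Sg) Hs Ss) :
  exists s : 'S_r, Hs = Hg *m (perm_mx s)^T /\ Ss = perm_mx s *m Sg.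
Proof.
have [C [g [MVIE _ EinSg polarE]]] := hscat.
have [[symC _] _ _] := MVIE.
have detC := MVIE_box_det MVIE.
have g_half := MVIE_box_center MVIE.
have C_unit : C \in unitmx.
  by rewrite unitmxE unitfE gt_eqF // (lt_le_trans _ detC) // exprn_gt0 // invr_gt0.
have [A [SsE HgE detA]] :=
  detmax_optimal_mixing hHg (ellipsoid_row_free C_unit EinSg) hSg hopt.
have SginA : conv_cols Sg `<=` [set y | box R r (A *m y)].
  by move=> y /(conv_cols_mulmx A); rewrite -SsE; apply: conv_cols_box; case: hopt => -[].
have tight := ellipsoid_in_box_tight (subset_trans EinSg SginA) detC detA.
have rowA i : exists j, row i A = 'e_j.
  have [gram_i Ag_i] := tight i.
  apply: ext_polar_box_row; rewrite -g_half // -polarE.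
  exact: tight_row_polar_bd.
have A_unit : A \in unitmx by rewrite unitmxE unitfE -sqrf_eq0 gt_eqF // (lt_le_trans ltr01).
have [s AE] := perm_mx_of_rows A_unit rowA.
exists s; split; last by rewrite SsE AE.
by rewrite HgE AE -mulmxA tr_perm_mx -perm_mxM mulgV perm_mx1 mulmx1.
Qed.
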